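(* Let $b,c>0$ and let $x_1,x_2,\dots\in\mathbb{R}^d$ satisfy $\|x_t\|^2\le X^2$ for all $t$. Define $D_1=bI+x_1x_1^\top$ and $D_t=\big(D_{t-1}^{-1}+c^{-1}I\big)^{-1}+x_tx_t^\top$ for $t\ge2$. Then for every $t\ge1$ all eigenvalues of $D_t$ satisfy \[ \max_i\lambda_i(D_t)\le\max\Big\{\frac{3X^2+\sqrt{X^4+4X^2c}}{2},\ b+X^2\Big\}. \] *)

From mathcomp Require Import all_boot all_order all_algebra.
Set Implicit Arguments. Unset Strict Implicit. Unset Printing Implicit Defensive.
Import Order.TTheory GRing.Theory Num.Theory.
Local Open Scope ring_scope.

(* The sequence D_t, t >= 1, of the paper; index 0 is an unused dummy (0).
   D_1 = b I + x_1 x_1^T,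
   D_t = (D_{t-1}^{-1} + c^{-1} I)^{-1} + x_t x_t^T  for t >= 2. *)
Fixpoint Dseq (R : fieldType) (d : nat) (b c : R) (x : nat -> 'cV[R]_d)
  (t : nat) : 'M[R]_d :=
  match t with
  | 0 => 0
  | 1 => b%:M + x 1%N *m (x 1%N)^T
  | (s.+1 as t').+1 =>
      invmx (invmx (Dseq b c x t') + c^-1%:M) + x t'.+1 *m (x t'.+1)^T
  end.

Definition sqnorm (R : ringType) (d : nat) (v : 'cV[R]_d) : R :=
  \sum_(i < d) v i 0 ^+ 2.

From mathcomp Require Import all_boot all_order all_algebra.
From mathcomp Require Import ring lra.
Import Order.TTheory GRing.Theory Num.Theory.
Set Implicit Arguments. Unset Strict Implicit. Unset Printing Implicit Defensive.
Local Open Scope ring_scope.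

(* Track Rayleigh-quotient bounds  m |v|^2 <= v D v^T <= M |v|^2  of the
   symmetric matrices D_t.  Since (D^-1 + c^-1 I)^-1 = c I - c^2 (D + c I)^-1,
   the first half of the update maps the bounds (m, M) to
   (c m / (m + c), c M / (M + c)), and adding x x^T raises them by at most
   |x|^2 <= X^2.  So M is preserved once X^2 (M + c) <= M^2, i.e. once M lies
   above the root (X^2 + sqrt (X^4 + 4 X^2 c)) / 2; the stated bound also
   dominates the bound b + X^2 on D_1.  The lower bounds stay positive and
   only serve to keep the matrices invertible. *)

Section RealDot.
Variables (R : rcfType) (n : nat).
Implicit Types (u v w : 'rV[R]_n) (A B : 'M[R]_n) (a m M : R).

Definition dotmx u w : R := (u *m w^T) 0 0.

Lemma dotmxE u w : dotmx u w = \sum_i u 0 i * w 0 i.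
Proof. by rewrite /dotmx !mxE; apply: eq_bigr => i _; rewrite mxE. Qed.

Lemma dotmxC u w : dotmx u w = dotmx w u.
Proof. by rewrite !dotmxE; apply: eq_bigr => i _; rewrite mulrC. Qed.

Lemma dotmx0l w : dotmx 0 w = 0.
Proof. by rewrite /dotmx mul0mx mxE. Qed.

Lemma dotmxDl u v w : dotmx (u + v) w = dotmx u w + dotmx v w.
Proof. by rewrite /dotmx mulmxDl mxE. Qed.

Lemma dotmxBl u v w : dotmx (u - v) w = dotmx u w - dotmx v w.
Proof. by rewrite /dotmx mulmxBl !mxE. Qed.

Lemma dotmxZl a u w : dotmx (a *: u) w = a * dotmx u w.
Proof. by rewrite /dotmx -scalemxAl mxE. Qed.

Lemma dotmxBr u v w : dotmx w (u - v) = dotmx w u - dotmx w v.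
Proof. by rewrite !(dotmxC w) dotmxBl. Qed.

Lemma dotmxZr a u w : dotmx w (a *: u) = a * dotmx w u.
Proof. by rewrite !(dotmxC w) dotmxZl. Qed.

Lemma dotmx_ge0 u : 0 <= dotmx u u.
Proof. by rewrite dotmxE sumr_ge0 // => i _; rewrite -expr2 sqr_ge0. Qed.

Lemma dotmx_gt0 u : u != 0 -> 0 < dotmx u u.
Proof.
move=> u_neq0; rewrite lt_def dotmx_ge0 andbT; apply: contra u_neq0 => /eqP u0.
have u2_ge0 (j : 'I_n) : predT j -> 0 <= u 0 j * u 0 j by rewrite -expr2 sqr_ge0.
apply/eqP/rowP => i; rewrite mxE; apply/eqP; rewrite -[_ == 0]orbb -mulf_eq0.
by move: u0; rewrite dotmxE => /(psumr_eq0P u2_ge0)/(_ i isT) ->.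
Qed.

Lemma dotmxMl_sym A u w : A^T = A -> dotmx (u *m A) w = dotmx u (w *m A).
Proof. by move=> symA; rewrite /dotmx trmx_mul symA mulmxA. Qed.

Lemma dotmx_CauchySchwarz u w : dotmx u w ^+ 2 <= dotmx u u * dotmx w w.
Proof.
have [->|/dotmx_gt0 ww_gt0] := eqVneq w 0.
  by rewrite dotmxC dotmx0l dotmx0l expr0n mulr0.
set a := dotmx w w in ww_gt0 *; set p := dotmx u w.
have := dotmx_ge0 (a *: u - p *: w).
rewrite !(dotmxBl, dotmxBr, dotmxZl, dotmxZr) (dotmxC w u) -/p -/a => h.
have : 0 <= a * (a * dotmx u u - p ^+ 2) by nra.
by rewrite pmulr_rge0 // subr_ge0 mulrC.
Qed.

Definition qform A v : R := dotmx (v *m A) v.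

Lemma qformD A B v : qform (A + B) v = qform A v + qform B v.
Proof. by rewrite /qform mulmxDr dotmxDl. Qed.

Lemma qformB A B v : qform (A - B) v = qform A v - qform B v.
Proof. by rewrite /qform mulmxBr dotmxBl. Qed.

Lemma qformZ a A v : qform (a *: A) v = a * qform A v.
Proof. by rewrite /qform -scalemxAr dotmxZl. Qed.

Lemma qform_scalar a v : qform a%:M v = a * dotmx v v.
Proof. by rewrite /qform mul_mx_scalar dotmxZl. Qed.

Lemma qform_rank1 (x : 'cV[R]_n) v : qform (x *m x^T) v = dotmx v x^T ^+ 2.
Proof.
rewrite /qform /dotmx trmxK mulmxA [v *m x]mx11_scalar mul_scalar_mx.
by rewrite -scalemxAl mxE -trmx_mul !mxE eqxx mulr1n expr2.
Qed.

Definition mx_lbound A m := forall v, m * dotmx v v <= qform A v.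
Definition mx_ubound A M := forall v, qform A v <= M * dotmx v v.

Lemma mx_lboundD A B m m' :
  mx_lbound A m -> mx_lbound B m' -> mx_lbound (A + B) (m + m').
Proof. by move=> hA hB v; rewrite qformD mulrDl lerD. Qed.

Lemma mx_uboundD A B M M' :
  mx_ubound A M -> mx_ubound B M' -> mx_ubound (A + B) (M + M').
Proof. by move=> hA hB v; rewrite qformD mulrDl lerD. Qed.

Lemma mx_ubound_le A M M' : M <= M' -> mx_ubound A M -> mx_ubound A M'.
Proof. by move=> leMM' hA v; apply: le_trans (hA v) _; rewrite ler_wpM2r ?dotmx_ge0. Qed.

Lemma mx_lbound_scalar a : mx_lbound a%:M a.
Proof. by move=> v; rewrite qform_scalar. Qed.

Lemma mx_ubound_scalar a : mx_ubound a%:M a.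
Proof. by move=> v; rewrite qform_scalar. Qed.

Lemma mx_lbound_rank1 (x : 'cV[R]_n) : mx_lbound (x *m x^T) 0.
Proof. by move=> v; rewrite qform_rank1 mul0r sqr_ge0. Qed.

Lemma mx_ubound_rank1 (x : 'cV[R]_n) : mx_ubound (x *m x^T) (dotmx x^T x^T).
Proof.
by move=> v; rewrite qform_rank1 mulrC; apply: dotmx_CauchySchwarz.
Qed.

Lemma mx_lbound_unitmx A m : 0 < m -> mx_lbound A m -> A \in unitmx.
Proof.
move=> m_gt0 hA; rewrite unitmxE unitfE; apply/det0P => -[v v_neq0 vA0].
have := hA v; rewrite /qform vA0 dotmx0l.
by have := dotmx_gt0 v_neq0; nra.
Qed.

Lemma mx_ubound_invmx A m : 0 < m -> mx_lbound A m -> mx_ubound (invmx A) m^-1.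
Proof.
move=> m_gt0 hA v; have uA := mx_lbound_unitmx m_gt0 hA.
set w := v *m invmx A.
have wA : w *m A = v by rewrite /w mulmxKV.
have hw := hA w; rewrite /qform wA in hw.
have diff_ge0 := dotmx_ge0 (v - m *: w).
rewrite !(dotmxBl, dotmxBr, dotmxZl, dotmxZr) (dotmxC w v) in diff_ge0.
rewrite /qform -/w (dotmxC w v) ler_pdivlMl //.
set p := dotmx v w in hw diff_ge0 *; nra.
Qed.

Lemma mx_lbound_invmx A m M : 0 < m -> 0 < M -> A^T = A ->
  mx_lbound A m -> mx_ubound A M -> mx_lbound (invmx A) M^-1.
Proof.
move=> m_gt0 M_gt0 symA hA HA v; have uA := mx_lbound_unitmx m_gt0 hA.
set w := v *m invmx A.
have wA : w *m A = v by rewrite /w mulmxKV.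
have shift_ge0 : 0 <= qform A (w - M^-1 *: v).
  exact: le_trans (mulr_ge0 (ltW m_gt0) (dotmx_ge0 _)) (hA _).
rewrite /qform mulmxBl -scalemxAl wA !(dotmxBl, dotmxBr, dotmxZl, dotmxZr) in shift_ge0.
rewrite (dotmxMl_sym _ _ symA) wA -/(qform A v) in shift_ge0.
have Hv : M^-1 * qform A v <= dotmx v v by rewrite ler_pdivrMl.
have Hv' : M^-1 * (M^-1 * qform A v) <= M^-1 * dotmx v v.
  by rewrite ler_pM2l ?invr_gt0.
by rewrite /qform -/w (dotmxC w v); lra.
Qed.

Lemma eigenvalue_le_ubound A M lam : mx_ubound A M -> eigenvalue A lam -> lam <= M.
Proof.
move=> HA /eigenvalueP [v vA v_neq0].
by have := HA v; rewrite /qform vA dotmxZl ler_pM2r // dotmx_gt0.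
Qed.

End RealDot.

Lemma sqnorm_dotmx (R : rcfType) n (x : 'cV[R]_n) : sqnorm x = dotmx x^T x^T.
Proof. by rewrite /sqnorm dotmxE; apply: eq_bigr => i _; rewrite !mxE expr2. Qed.

Lemma invmx_invD_scalar (F : fieldType) n (D : 'M[F]_n) c :
  c != 0 -> D \in unitmx -> D + c%:M \in unitmx ->
  invmx (invmx D + c^-1%:M) = c%:M - c ^+ 2 *: invmx (D + c%:M).
Proof.
move=> c_neq0 uD uF; set iF := invmx (D + c%:M).
have iFD : iF *m D = 1%:M - c *: iF.
  by rewrite -[D](addrK c%:M) mulmxBr mulVmx // mul_mx_scalar.
have E_inv : c *: (iF *m D) *m (invmx D + c^-1%:M) = 1%:M.
  rewrite mulmxDr -!scalemxAl -mulmxA mulmxV // mulmx1 mul_mx_scalar scalerA.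
  by rewrite mulfV // scale1r iFD addrC subrK.
rewrite -[invmx _]mul1mx -E_inv mulmxK; last by case/mulmx1_unit: E_inv.
by rewrite iFD scalerBr scalemx1 scalerA -expr2.
Qed.

Lemma invD_scalar_bounds (R : rcfType) n (D : 'M[R]_n) c m M :
  0 < c -> 0 < m -> 0 < M -> D^T = D -> mx_lbound D m -> mx_ubound D M ->
  let G := invmx (invmx D + c^-1%:M) in
  [/\ G^T = G, mx_lbound G (c * m / (m + c)) & mx_ubound G (c * M / (M + c))].
Proof.
move=> c_gt0 m_gt0 M_gt0 symD hD HD G.
have mc_gt0 : 0 < m + c by rewrite addr_gt0.
have Mc_gt0 : 0 < M + c by rewrite addr_gt0.
have symF : (D + c%:M)^T = D + c%:M by rewrite raddfD /= symD tr_scalar_mx.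
have hF := mx_lboundD hD (mx_lbound_scalar c).
have HF := mx_uboundD HD (mx_ubound_scalar c).
have uF := mx_lbound_unitmx mc_gt0 hF.
have uD := mx_lbound_unitmx m_gt0 hD.
have -> : G = c%:M - c ^+ 2 *: invmx (D + c%:M).
  by rewrite /G invmx_invD_scalar ?gt_eqF.
have qG v : qform (c%:M - c ^+ 2 *: invmx (D + c%:M)) v
            = c * dotmx v v - c ^+ 2 * qform (invmx (D + c%:M)) v.
  by rewrite qformB qformZ qform_scalar.
have shrink a : 0 < a + c -> c * a / (a + c) = c - c ^+ 2 * (a + c)^-1.
  by move=> ac_gt0; field; rewrite gt_eqF.
have c2_gt0 : 0 < c ^+ 2 by rewrite exprn_gt0.
split.
- by rewrite raddfB /= tr_scalar_mx linearZ /= trmx_inv symF.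
- by move=> v; rewrite qG shrink //; have := mx_ubound_invmx mc_gt0 hF v; nra.
- by move=> v; rewrite qG shrink //; have := mx_lbound_invmx mc_gt0 Mc_gt0 symF hF HF v; nra.
Qed.

Lemma quadratic_root_bound (R : rcfType) (Y c B : R) : 0 <= Y -> 0 <= c ->
  (Y + Num.sqrt (Y ^+ 2 + 4%:R * Y * c)) / 2%:R <= B -> Y * (B + c) <= B ^+ 2.
Proof.
move=> Y_ge0 c_ge0; set S := Num.sqrt _ => hB.
have S_ge0 : 0 <= S := sqrtr_ge0 _.
have S2 : S ^+ 2 = Y ^+ 2 + 4%:R * Y * c by rewrite sqr_sqrtr // addr_ge0 ?sqr_ge0 ?mulr_ge0.
have : S <= 2%:R * B - Y by lra.
by nra.
Qed.

Lemma Dseq_bounds (R : rcfType) d (b c Y B : R) (x : nat -> 'cV[R]_d) :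
  0 < b -> 0 < c -> 0 <= Y -> (forall t, (1 <= t)%N -> sqnorm (x t) <= Y) ->
  b + Y <= B -> Y * (B + c) <= B ^+ 2 ->
  forall s, let D := Dseq b c x s.+1 in
  [/\ D^T = D, mx_ubound D B & exists2 m, 0 < m & mx_lbound D m].
Proof.
move=> b_gt0 c_gt0 Y_ge0 hx hbB hYB.
have B_gt0 : 0 < B by lra.
have rank1_bound t : (1 <= t)%N -> mx_ubound (x t *m (x t)^T) Y.
  by move=> t_ge1; apply: mx_ubound_le (mx_ubound_rank1 _); rewrite -sqnorm_dotmx hx.
have sym_rank1 t : (x t *m (x t)^T)^T = x t *m (x t)^T by rewrite trmx_mul trmxK.
elim=> [|s [symD HD [m m_gt0 hD]]] /=.
  split; first by rewrite raddfD /= sym_rank1 tr_scalar_mx.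
    exact: mx_ubound_le hbB (mx_uboundD (mx_ubound_scalar b) (rank1_bound 1%N isT)).
  exists b => //; rewrite -[X in mx_lbound _ X]addr0.
  exact: mx_lboundD (mx_lbound_scalar b) (mx_lbound_rank1 _).
have [symG hG HG] := invD_scalar_bounds c_gt0 m_gt0 B_gt0 symD hD HD.
split; first by rewrite raddfD /= symG sym_rank1.
  apply: mx_ubound_le (mx_uboundD HG (rank1_bound s.+2 isT)).
  by rewrite -lerBrDr ler_pdivrMr ?addr_gt0 //; nra.
exists (c * m / (m + c)); first by rewrite divr_gt0 ?mulr_gt0 ?addr_gt0.
by rewrite -[c * m / _]addr0; apply: mx_lboundD hG (mx_lbound_rank1 _).
Qed.

Theorem lemma7 (R : rcfType) (d : nat) (b c X : R) (x : nat -> 'cV[R]_d)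
  (hb : 0 < b) (hc : 0 < c)
  (hx : forall t : nat, (1 <= t)%N -> sqnorm (x t) <= X ^+ 2) :
  forall (t : nat) (lam : R), (1 <= t)%N ->
    eigenvalue (Dseq b c x t) lam ->
    lam <= Num.max ((3%:R * X ^+ 2 + Num.sqrt (X ^+ 4 + 4%:R * X ^+ 2 * c)) / 2%:R)
                   (b + X ^+ 2).
Proof.
set S := Num.sqrt _; set B := Num.max _ _.
have Y_ge0 : 0 <= X ^+ 2 := sqr_ge0 X.
have hbB : b + X ^+ 2 <= B by rewrite le_max lexx orbT.
have hYB : X ^+ 2 * (B + c) <= B ^+ 2.
  apply: (quadratic_root_bound Y_ge0 (ltW hc)).
  rewrite -exprM -/S.
  apply: le_trans (_ : _ <= (3%:R * X ^+ 2 + S) / 2%:R) _; first by lra.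
  by rewrite le_max lexx.
case=> [//|s] lam _ /eigenvalue_le_ubound; apply.
by have [_ HD _] := Dseq_bounds hb hc Y_ge0 hx hbB hYB s.
Qed.
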